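(* For every positive integer $d$, there exist infinitely many monic rigid Carmichael polynomials of order $d$ in $\mathbb{F}_q[t]$.
   Context: $\mathbb{F}_q$ is the finite field with $q$ elements. For an integer $d\ge1$, a rigid Carmichael polynomial of order $d$ in $\mathbb{F}_q[t]$ is a reducible square-free polynomial $g\in\mathbb{F}_q[t]$ such that $i\cdot\deg P$ divides $d\cdot\deg g$ for every irreducible polynomial $P$ dividing $g$ and every $i=1,\dots,d$. *)

From HB Require Import structures.
From mathcomp Require Import all_boot all_order all_algebra all_field.
Set Implicit Arguments. Unset Strict Implicit. Unset Printing Implicit Defensive.
Import GRing.Theory.
Local Open Scope ring_scope.

Definition reducible_poly (F : fieldType) (g : {poly F}) : Prop :=
  (1 < size g)%N /\ ~ irreducible_poly g.

(* square-free: no square of a non-constant polynomial divides g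
   (this excludes g = 0) *)
Definition squarefree_poly (F : fieldType) (g : {poly F}) : Prop :=
  forall h : {poly F}, h * h %| g -> (size h <= 1)%N.

Definition rigid_carmichael (F : fieldType) (d : nat) (g : {poly F}) : Prop :=
  [/\ reducible_poly g, squarefree_poly g &
      forall P : {poly F}, irreducible_poly P -> P %| g ->
        forall i : nat, (1 <= i <= d)%N ->
          (i * (size P).-1 %| d * (size g).-1)%N ].

(* Let q = #|F| and n = 2m.  The polynomial X^(q^n) - X is squarefree (its derivative
   is -1), and each monic irreducible factor P has degree dividing n: the field
   F[X]/(P), of order q^(deg P), is fixed pointwise by y |-> y^(q^n), hence by
   y |-> y^(q^(n mod deg P)), which has too few fixed points unless n mod deg P = 0.
   The factors of degree < n have degree at most m, so they account for at most
   m q^(m+1) of the degree q^n; once m (2N+1) <= q^(m-1) at least N factors of degree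
   exactly n remain.  For N = 2 d! the product of N of them is squarefree, reducible,
   of degree N n, and i n divides d N n for every i <= d; taking m large makes these
   rigid Carmichael polynomials arbitrarily large. *)

From HB Require Import structures.
From mathcomp Require Import all_boot all_order all_algebra all_field.
From mathcomp Require Import ring zify.
From Stdlib Require Import Classical_Prop.
Set Implicit Arguments. Unset Strict Implicit. Unset Printing Implicit Defensive.
Import GRing.Theory.

Lemma proper_dvdn_leq_half k m : 0 < m -> k %| 2 * m -> k != 2 * m -> k <= m.
Proof.
move=> m_gt0 /dvdnP [[|[|c]] mk] kn; first lia.
  by rewrite mk mul1n eqxx in kn.
nia.
Qed.

Lemma exists_exp_dominates q c b : 1 < q -> exists2 m, b <= m & m * c <= q ^ m.-1.
Proof.
move=> q_gt1; set u := b + c; exists (3 * u).+1 => /=; first lia.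
have cube_le : u.+1 * u.+1 * u.+1 <= q ^ (3 * u).
  have u_lt := ltn_expl u q_gt1.
  by rewrite (mulnC 3) expnM !expnS expn0 muln1 mulnA; do !apply: leq_mul.
by apply: leq_trans cube_le; rewrite /u; nia.
Qed.

Local Open Scope ring_scope.

Section Polynomials.

Variable F : fieldType.
Implicit Types p q r G : {poly F}.

Lemma irreducible_eqp p r : p %= r -> irreducible_poly p -> irreducible_poly r.
Proof.
move=> epr [sp irrp]; split=> [|q sq qr]; first by rewrite -(eqp_size epr).
have qp : q %| p by rewrite (eqp_dvdr _ epr).
exact: eqp_trans (irrp _ sq qp) epr.
Qed.

Lemma irreducible_monic_eqp p : irreducible_poly p ->
  exists r, [/\ r \is monic, irreducible_poly r & r %= p].
Proof.
move=> irrp; have lp0 : lead_coef p != 0 by rewrite lead_coef_eq0 irredp_neq0.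
have erp : (lead_coef p)^-1 *: p %= p by rewrite eqp_scale ?invr_eq0.
exists ((lead_coef p)^-1 *: p); split=> //.
  by rewrite monicE lead_coefZ mulVf.
by apply: irreducible_eqp irrp; rewrite eqp_sym.
Qed.

Lemma monic_irreducible_dvdp p : (1 < size p)%N ->
  exists r, [/\ r \is monic, irreducible_poly r & r %| p].
Proof.
elim: {p}_.+1 {-2}p (ltnSn (size p)) => // k IHk p ltpk sp.
have [irrp | Nirrp] := classic (irreducible_poly p).
  have [r [mr irrr erp]] := irreducible_monic_eqp irrp.
  by exists r; rewrite (eqp_dvdl _ erp) dvdpp.
have [q [sq1 qp Nqp]] : exists q, [/\ size q != 1%N, q %| p & ~~ (q %= p)].
  apply: NNPP => Nq; apply: Nirrp; split=> // q sq qp.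
  by apply: NNPP => Nqp; apply: Nq; exists q; split=> //; apply/negP.
have p0 : p != 0 by rewrite -size_poly_gt0 ltnW.
have ltqp : (size q < size p)%N.
  by rewrite ltn_neqAle (dvdp_size_eqp qp) Nqp dvdp_leq.
have sq : (1 < size q)%N.
  have : q != 0 by apply: contraNneq p0 => q0; rewrite -dvd0p -q0.
  by rewrite -size_poly_gt0; case: (size q) sq1 => [|[|]].
have [r [mr irrr rq]] := IHk q (leq_trans ltqp ltpk) sq.
by exists r; split=> //; apply: dvdp_trans qp.
Qed.

Lemma irreducible_dvdp_prod p (l : seq {poly F}) : irreducible_poly p ->
    (forall q, q \in l -> irreducible_poly q) ->
  p %| \prod_(q <- l) q -> exists2 q, q \in l & p %= q.
Proof.
move=> irrp; elim: l => [|q l IHl] irrl.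
  by rewrite big_nil dvdp1 => /eqP sp1; move: irrp.1; rewrite sp1.
have irrq := irrl q (mem_head _ _).
rewrite big_cons; have [pq _ | Npq] := boolP (p %| q).
  by exists q; rewrite ?mem_head //; apply: irrq; rewrite // neq_ltn irrp.1 orbT.
rewrite Gauss_dvdpr ?irreducible_poly_coprime // => /IHl [|r rl pr].
  by move=> r rl; apply: irrl; rewrite inE rl orbT.
by exists r; rewrite // inE rl orbT.
Qed.

Lemma dvdp_prod_monic_irreducible G (l : seq {poly F}) : uniq l ->
    (forall q, q \in l -> [/\ q \is monic, irreducible_poly q & q %| G]) ->
  \prod_(q <- l) q %| G.
Proof.
elim: l => [|q l IHl] /= => [_ _|/andP [ql ul] Hl]; first by rewrite big_nil dvd1p.
have [mq irrq qG] := Hl q (mem_head _ _).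
have {}Hl r : r \in l -> [/\ r \is monic, irreducible_poly r & r %| G].
  by move=> rl; apply: Hl; rewrite inE rl orbT.
rewrite big_cons Gauss_dvdp ?qG ?IHl // irreducible_poly_coprime //.
apply/negP => /(irreducible_dvdp_prod irrq) [r|r rl].
  by case/Hl.
have [mr _ _] := Hl r rl; rewrite eqp_monic // => /eqP qr.
by rewrite qr rl in ql.
Qed.

Lemma size_prod_eq (l : seq {poly F}) n : (forall q, q \in l -> size q = n.+1) ->
  size (\prod_(q <- l) q) = (size l * n).+1.
Proof.
elim: l => [|q l IHl] sl; first by rewrite big_nil size_poly1.
have sq := sl q (mem_head _ _).
have {}IHl : size (\prod_(r <- l) r) = (size l * n).+1.
  by apply: IHl => r rl; apply: sl; rewrite inE rl orbT.
rewrite big_cons size_mul ?IHl ?sq /=; first lia.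
  by rewrite -size_poly_gt0 sq.
by rewrite -size_poly_gt0 IHl.
Qed.

Lemma squarefree_size_le_sum G (T : seq {poly F}) :
    G != 0 -> squarefree_poly G -> uniq T ->
    (forall p, p \is monic -> irreducible_poly p -> p %| G -> p \in T) ->
  ((size G).-1 <= \sum_(p <- T) (size p).-1)%N.
Proof.
elim: {G}_.+1 {-2}G (ltnSn (size G)) T => // k IHk G ltGk T G0 sqG uT HT.
have [|sG] := leqP (size G) 1; first by case: (size G) => [|[|]].
have [p [mp irrp pG]] := monic_irreducible_dvdp sG.
have [u Gu] : exists u : {poly F}, G = u * p by apply/dvdpP.
have u0 : u != 0 by apply: contraNneq G0 => u0; rewrite Gu u0 mul0r.
have p0 := irredp_neq0 irrp.
have Npu : ~~ (p %| u).
  apply/negP => pu; have := sqG p; rewrite Gu dvdp_mul2r // => /(_ pu).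
  by rewrite leqNgt irrp.1.
have sGu : (size G).-1 = ((size u).-1 + (size p).-1)%N.
  by rewrite Gu size_mul // (polySpred u0) (polySpred p0) addSn addnS.
have ltuG : (size u < size G)%N.
  rewrite (polySpred G0) ltnS sGu {1}(polySpred u0) -addn1 leq_add2l.
  by rewrite -subn1 subn_gt0 irrp.1.
rewrite (perm_big _ (perm_to_rem (HT p mp irrp pG))) big_cons /= sGu addnC.
apply: leq_add => //; apply: IHk => //.
- exact: leq_trans ltuG ltGk.
- by move=> h hu; apply: sqG; rewrite Gu dvdp_mulr.
- exact: rem_uniq.
move=> q mq irrq qu; rewrite (mem_rem_uniq _ uT) inE /= HT ?andbT //.
  by apply: contraNneq Npu => <-.
by rewrite Gu dvdp_mulr.
Qed.

End Polynomials.

Lemma dvdp_comp_sub (R : idomainType) (a b h : {poly R}) :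
  (a - b) %| (h \Po a) - (h \Po b).
Proof.
elim/poly_ind: h => [|h c IH]; first by rewrite !comp_poly0 subrr dvdp0.
rewrite !comp_polyD !comp_polyM !comp_polyX !comp_polyC.
have -> : (h \Po a) * a + c%:P - ((h \Po b) * b + c%:P) =
   ((h \Po a) - (h \Po b)) * a + (h \Po b) * (a - b) by ring.
by apply: dvdp_add; [apply: dvdp_mulr | apply: dvdp_mull].
Qed.

Lemma in_qpoly_dvdp_eq0 (R : fieldType) (P p : {poly R})
  (mi : monic_irreducible_poly P) : P %| p -> in_qpoly P p = 0.
Proof.
move=> Pp; apply: val_inj => /=.
by rewrite (mk_monicE mi) -(Pdiv.IdomainMonic.modpE mi.2) modp_eq0.
Qed.

Lemma size_XnsubX (R : nzRingType) m : (1 < m)%N ->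
  size ('X^m - 'X : {poly R}) = m.+1.
Proof. by move=> m1; rewrite size_polyDl size_polyXn // size_polyN size_polyX. Qed.

Lemma card_le_exp_fixed (K : finFieldType) m : (1 < m)%N ->
  (forall y : K, y ^+ m = y) -> (#|K| <= m)%N.
Proof.
move=> m1 fixK; rewrite -ltnS -(size_XnsubX K m1) cardE.
apply: max_poly_roots; last exact: enum_uniq.
  by rewrite -size_poly_gt0 size_XnsubX.
by apply/allP => y _; rewrite /root !hornerE fixK subrr.
Qed.

Lemma exp_fixed_modn (R : pzSemiRingType) (y : R) (q k n : nat) :
  y ^+ (q ^ k) = y -> y ^+ (q ^ n) = y -> y ^+ (q ^ (n %% k)) = y.
Proof.
move=> yk; have yak a : y ^+ (q ^ (a * k)) = y.
  by elim: a => [|a IHa]; rewrite ?expr1 // mulSn expnD exprM yk IHa.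
by rewrite {1}(divn_eq n k) expnD exprM yak.
Qed.

Section FiniteField.

Variable F : finFieldType.
Local Notation q := #|F|.

Lemma pnat_card_pchar : [pchar F].-nat q.
Proof.
have [p p_pr pc] := finPcharP F.
have -> : q = (p ^ logn p q)%N := card_pprimeChar pc.
by rewrite pnatX pnatE ?pc.
Qed.

Lemma pnat_card_exp_pchar_poly n : [pchar {poly F}].-nat (q ^ n)%N.
Proof. by rewrite (eq_pnat _ (@pchar_poly F)) pnatX pnat_card_pchar. Qed.

Lemma card_exp_gt1 n : (0 < n)%N -> (1 < q ^ n)%N.
Proof. by move=> n0; rewrite -{1}(expn0 q) ltn_exp2l ?finNzRing_gt1. Qed.

Lemma natr_card_exp n : (0 < n)%N -> (q ^ n)%N%:R = 0 :> {poly F}.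
Proof.
move=> n0; have pc : pdiv (q ^ n) \in [pchar {poly F}].
  by apply: pnatPpi (pnat_card_exp_pchar_poly n) _; rewrite pi_pdiv card_exp_gt1.
by apply/eqP; rewrite -(dvdn_pcharf pc) pdiv_dvd.
Qed.

Lemma expf_card_exp (c : F) n : c ^+ (q ^ n) = c.
Proof. by elim: n => [|n IHn]; rewrite ?expr1 // expnSr exprM IHn expf_card. Qed.

Lemma exp_card_exp_comp (h : {poly F}) n : h ^+ (q ^ n) = h \Po 'X^(q ^ n)%N.
Proof.
elim/poly_ind: h => [|h c IHh].
  by rewrite comp_poly0 expr0n expn_eq0 eqn0Ngt (ltnW (finNzRing_gt1 F)).
rewrite exprDn_pchar ?pnat_card_exp_pchar_poly // exprMn IHh -polyC_exp.
by rewrite expf_card_exp comp_polyD comp_polyM comp_polyX comp_polyC.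
Qed.

Lemma squarefree_XqnsubX n : (0 < n)%N ->
  squarefree_poly ('X^(q ^ n)%N - 'X : {poly F}).
Proof.
move=> n0 h /dvdpP [u Hu].
have : h %| ('X^(q ^ n)%N - 'X : {poly F})^`().
  rewrite Hu !derivM; apply: dvdp_add.
    by apply: dvdp_mull; apply: dvdp_mulr.
  by apply: dvdp_mull; apply: dvdp_add; [apply: dvdp_mull | apply: dvdp_mulr].
rewrite derivB derivXn derivX -mulr_natr natr_card_exp // mulr0 sub0r dvdpNr.
by rewrite dvdp1 => /eqP ->.
Qed.

Lemma size_irreducible_dvdp_XqnsubX (P : {poly F}) n :
    P \is monic -> irreducible_poly P -> P %| 'X^(q ^ n)%N - 'X ->
  ((size P).-1 %| n)%N.
Proof.
move=> monP irrP PXn; pose mi : monic_irreducible_poly P := (irrP, monP).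
pose K := {poly %/ P with mi}.
have fixKn (y : K) : y ^+ (q ^ n) = y.
  have Py : P %| (y : {poly F}) ^+ (q ^ n) - (y : {poly F}).
    rewrite exp_card_exp_comp; apply: dvdp_trans PXn _.
    by have := dvdp_comp_sub 'X^(q ^ n)%N 'X (y : {poly F}); rewrite comp_polyXr.
  have := in_qpoly_dvdp_eq0 mi Py.
  have yK : in_qpoly P (y : {poly F}) = y.
    by apply: val_inj; apply: in_qpoly_small; apply: size_mk_monic.
  by rewrite rmorphB rmorphXn /= yK => /eqP; rewrite subr_eq0 => /eqP.
set k := (size P).-1.
have fixKk (y : K) : y ^+ (q ^ k) = y by rewrite -card_qfpoly expf_card.
have k_gt0 : (0 < k)%N by rewrite ltn_predRL irrP.1.
apply: contraT; rewrite /dvdn -lt0n => r_gt0.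
have := card_le_exp_fixed (card_exp_gt1 r_gt0) (fun y => exp_fixed_modn (fixKk y) (fixKn y)).
by rewrite card_qfpoly leq_exp2l ?finNzRing_gt1 // leqNgt ltn_mod k_gt0.
Qed.

Definition monic_irreducible_divisors (G : {poly F}) : seq {poly F} :=
  [seq p <- map val (enum {poly_(size G) F}) |
     [&& p \is monic, irreducibleb p & p %| G]].

Lemma monic_irreducible_divisorsP G p : G != 0 ->
  reflect [/\ p \is monic, irreducible_poly p & p %| G]
          (p \in monic_irreducible_divisors G).
Proof.
move=> G0; rewrite mem_filter; apply: (iffP andP).
  by case=> /and3P [mp /irreducibleP irrp pG].
case=> mp irrp pG; split; first by rewrite mp pG andbT; apply/irreducibleP.
apply/mapP; exists (npolyp (size G) p); first by rewrite mem_enum.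
by rewrite /= npolypK // dvdp_leq.
Qed.

Lemma uniq_monic_irreducible_divisors G : uniq (monic_irreducible_divisors G).
Proof. by rewrite filter_uniq // map_inj_uniq ?enum_uniq //; apply: val_inj. Qed.

Lemma uniq_polys_size_le (T : seq {poly F}) b : uniq T ->
  (forall p, p \in T -> size p <= b)%N -> (size T <= q ^ b)%N.
Proof.
move=> uT sT.
have -> : (q ^ b)%N = size (map val (enum {poly_b F})).
  by rewrite size_map -cardE card_npoly.
apply: uniq_leq_size => // p pT.
apply/mapP; exists (npolyp b p); first by rewrite mem_enum.
by rewrite /= npolypK ?sT.
Qed.

Lemma monic_irreducibles_of_size m N :
    (0 < m)%N -> (m * (2 * N + 1) <= q ^ m.-1)%N ->
  exists l : seq {poly F}, [/\ uniq l, size l = N &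
    forall p, p \in l -> [/\ p \is monic, irreducible_poly p,
                             p %| 'X^(q ^ (2 * m))%N - 'X & size p = (2 * m).+1]].
Proof.
move=> m_gt0 hm; set n := (2 * m)%N; set G : {poly F} := 'X^(q ^ n)%N - 'X.
have n_gt0 : (0 < n)%N by rewrite muln_gt0.
have G0 : G != 0 by rewrite -size_poly_gt0 size_XnsubX // card_exp_gt1.
set T := monic_irreducible_divisors G.
have inT (p : {poly F}) : p \in T -> [/\ p \is monic, irreducible_poly p & p %| G].
  by move/(monic_irreducible_divisorsP _ G0).
have degT (p : {poly F}) : p \in T -> ((size p).-1 %| n)%N.
  by case/inT => *; apply: size_irreducible_dvdp_XqnsubX.
have uT : uniq T := uniq_monic_irreducible_divisors G.
set S := [seq p : {poly F} <- T | (size p).-1 == n].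
set S' := [seq p : {poly F} <- T | (size p).-1 != n].
have HT p : p \is monic -> irreducible_poly p -> p %| G -> p \in T.
  by move=> mp irrp pG; apply/(monic_irreducible_divisorsP _ G0).
have := squarefree_size_le_sum G0 (squarefree_XqnsubX n_gt0) uT HT.
clearbody T; rewrite size_XnsubX; last exact: card_exp_gt1.
rewrite succnK (bigID (fun p : {poly F} => (size p).-1 == n)).
rewrite -[\sum_(p <- T | _ == n) _]big_filter -[\sum_(p <- T | _ != n) _]big_filter.
rewrite -/S -/S'.
have -> : \sum_(p <- S) (size p).-1 = (n * size S)%N.
  rewrite (eq_big_seq (fun=> n)) => [|p]; last by rewrite mem_filter => /andP [/eqP].
  by rewrite big_const_seq count_predT iter_addn_0 mulnC.
have degS' (p : {poly F}) : p \in S' -> ((size p).-1 <= m)%N.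
  by rewrite mem_filter => /andP [pn /degT pT]; apply: proper_dvdn_leq_half.
have sumS' : (\sum_(p <- S') (size p).-1 <= m * q ^ m.+1)%N.
  rewrite (@leq_trans (\sum_(p <- S') m)) //; first by rewrite !big_seq leq_sum.
  rewrite big_const_seq count_predT iter_addn_0 leq_mul2l uniq_polys_size_le ?orbT //.
    exact: filter_uniq.
  by move=> p /degS'; case: (size p).
have [NS _ | SN le_size] := leqP N (size S).
  exists (take N S); split; first exact/take_uniq/filter_uniq.
    exact: size_takel.
  move=> p /mem_take; rewrite mem_filter => /andP [/eqP pn /inT [mp irrp pG]].
  by split=> //; rewrite -pn prednK // ltnW ?irrp.1.
have {}le_size : (q ^ n <= n * size S + m * q ^ m.+1)%N.
  exact: leq_trans le_size (leq_add (leqnn _) sumS').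
have e : (q ^ n = q ^ m.+1 * q ^ m.-1)%N by rewrite -expnD /n; congr expn; lia.
have A1 : (0 < q ^ m.+1)%N by rewrite expn_gt0 ltnW ?finNzRing_gt1.
by exfalso; move: le_size; rewrite e /n; nia.
Qed.

End FiniteField.

Lemma rigid_carmichael_prod (F : fieldType) d n (l : seq {poly F}) :
    (1 < size l)%N -> (d`! %| size l)%N ->
    (forall p, p \in l -> [/\ p \is monic, irreducible_poly p & size p = n.+1]) ->
    squarefree_poly (\prod_(p <- l) p) ->
  rigid_carmichael d (\prod_(p <- l) p).
Proof.
move=> l_gt1 dfact_l Hl sqg.
have irrl p : p \in l -> irreducible_poly p by case/Hl.
have sg : size (\prod_(p <- l) p) = (size l * n).+1.
  by apply: size_prod_eq => p /Hl [].
have p0l : l`_0 \in l by rewrite mem_nth // ltnW.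
set p0 := l`_0 in p0l.
have [_ irrp0 sp0] := Hl p0 p0l.
have n_gt0 : (0 < n)%N by have := irrp0.1; rewrite sp0.
split=> //.
  split; first by rewrite sg ltnS muln_gt0 n_gt0 ltnW.
  move=> irrg; have p0g : p0 %| \prod_(p <- l) p by rewrite (big_rem _ p0l) dvdp_mulIl.
  have p0_neq1 : size p0 != 1%N by rewrite sp0 eqSS -lt0n.
  have := eqp_size (irrg p0 p0_neq1 p0g); rewrite sp0 sg => -[] /eqP.
  by rewrite -{1}[n]mul1n eqn_mul2r (gtn_eqF n_gt0) eq_sym (gtn_eqF l_gt1).
move=> P irrP Pg i /andP [i_gt0 i_le_d].
have [p pl Pp] := irreducible_dvdp_prod irrP irrl Pg.
have [_ _ sp] := Hl p pl.
rewrite (eqp_size Pp) sp sg /= mulnA (dvdn_pmul2r n_gt0).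
by apply/dvdn_mull/(dvdn_trans _ dfact_l)/dvdn_fact; rewrite i_gt0.
Qed.

Theorem theorem4p8 (F : finFieldType) (d : nat) (hd : (0 < d)%N) :
  ~ exists s : seq {poly F},
      forall g : {poly F}, g \is monic -> rigid_carmichael d g -> g \in s.
Proof.
move=> [s Hs]; set N := (2 * d`!)%N; set M := (\max_(g <- s) size g)%N.
have [m M_lt_m hm] := exists_exp_dominates (2 * N + 1) M.+1 (finNzRing_gt1 F).
have m_gt0 : (0 < m)%N by apply: leq_trans M_lt_m.
have [l [ul sl Hl]] := monic_irreducibles_of_size m_gt0 hm.
have l_gt1 : (1 < size l)%N by rewrite sl /N; have := fact_gt0 d; lia.
have g_dvd : \prod_(p <- l) p %| 'X^(#|F| ^ (2 * m))%N - 'X.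
  by apply: dvdp_prod_monic_irreducible => // p /Hl [].
have g_rc : rigid_carmichael d (\prod_(p <- l) p).
  apply: (@rigid_carmichael_prod _ d (2 * m)) => //; first by rewrite sl dvdn_mull.
    by move=> p /Hl [].
  by move=> h /dvdp_trans/(_ g_dvd); apply: squarefree_XqnsubX; rewrite muln_gt0.
have g_monic : \prod_(p <- l) p \is monic by rewrite big_seq monic_prod // => p /Hl [].
have := @leq_bigmax_seq _ s xpredT (fun g : {poly F} => size g) _ (Hs _ g_monic g_rc) isT.
rewrite -/M (@size_prod_eq _ _ (2 * m)) => [|p /Hl [] //].
rewrite leqNgt => /negP; apply; rewrite ltnS (leq_trans (ltnW M_lt_m)) //.
by rewrite mulnA leq_pmull // muln_gt0 ltnW.
Qed.
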